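(* Let $C$ and $D$ be quasi-cyclic LDPC codes with circulant matrices (of a common size $z$ and common length), and let $H_{b(C)}$ and $H_{b(D)}$ be their base matrices. Let $C'$ (resp. $D'$) be the binary linear code with parity-check matrix $H_{b(C)}$ (resp. $H_{b(D)}$). If $C$ and $D$ satisfy the twisted condition $D^{\perp}\subset C$, then $C'$ and $D'$ satisfy the twisted condition $D'^{\perp}\subset C'$; equivalently, $H_{b(C)}\, H_{b(D)}^{T}=0$ over $\mathbb{F}_2$.
   Context: All codes are binary linear codes over $\mathbb{F}_2$. For a linear code $D\subseteq\mathbb{F}_2^n$, $D^{\perp}=\{d' : d\,d'^{T}=0\ \forall d\in D\}$. Codes $C,D$ satisfy the twisted condition if $D^{\perp}\subset C$; for parity-check matrices $H_C,H_D$ (so $C=\ker H_C$, $D=\ker H_D$) this is equivalent to $H_CH_D^T=0$. For a positive integer $z$, $I_z(1)$ is the $z\times z$ circulant permutation matrix of one circular right shift and $I_z(b)=I_z(1)^b$. A quasi-cyclic LDPC code with circulant matrices of size $z$ is given by a $J\times L$ model matrix $(p(i,j))$ with entries in $\{0,\dots,z-1\}\cup\{\infty\}$; its parity-check matrix is obtained by replacing each finite entry $p$ by $I_z(p)$ and each $\infty$ by the $z\times z$ zero matrix, and the code is the kernel of this matrix. Its base matrix is the $J\times L$ binary matrix with $1$ exactly at the positions where $p(i,j)\neq\infty$. *)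

From mathcomp Require Import all_boot all_algebra.
Set Implicit Arguments. Unset Strict Implicit. Unset Printing Implicit Defensive.
Import GRing.Theory.
Local Open Scope ring_scope.

Definition code_ker (m n : nat) (H : 'M['F_2]_(m, n)) : {set 'rV['F_2]_n} :=
  [set c : 'rV['F_2]_n | H *m c^T == 0].

Definition dual_code (n : nat) (D : {set 'rV['F_2]_n}) : {set 'rV['F_2]_n} :=
  [set d' : 'rV['F_2]_n | [forall d in D, d *m d'^T == 0]].

Definition twisted (n : nat) (C D : {set 'rV['F_2]_n}) : Prop :=
  dual_code D \subset C.

Lemma blk_proof (J z : nat) (i : 'I_(J * z)) : (i %/ z < J)%N.
Proof.
have : (nat_of_ord i < J * z)%N := ltn_ord i.
move: (nat_of_ord i) => k; clear i.
case: z => [|z] hk; first by rewrite muln0 in hk.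
by rewrite ltn_divLR.
Qed.
Definition blk (J z : nat) (i : 'I_(J * z)) : 'I_J := Ordinal (blk_proof i).

(* Entry (a,b) of the circulant permutation matrix I_z(p) = I_z(1)^p,
   where I_z(1) is the identity with columns circularly shifted right by one:
   I_z(1)(a, b) = 1 iff b = a + 1 mod z. *)
Definition circ_entry (z : nat) (p : 'I_z) (a b : nat) : 'F_2 :=
  if (b == (a + p) %% z)%N then 1 else 0.

(* Model matrix: entries in {0..z-1} (Some p) or infinity (None). *)
Definition qc_pcm (z J L : nat) (P : 'M[option 'I_z]_(J, L)) : 'M['F_2]_(J * z, L * z) :=
  \matrix_(i < J * z, j < L * z)
    match P (blk i) (blk j) with
    | Some p => circ_entry p (i %% z) (j %% z)
    | None => 0
    end.

Definition base_mx (z J L : nat) (P : 'M[option 'I_z]_(J, L)) : 'M['F_2]_(J, L) :=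
  \matrix_(i < J, j < L) if P i j is Some _ then 1 else 0.

From mathcomp Require Import all_boot all_algebra.
Set Implicit Arguments. Unset Strict Implicit. Unset Printing Implicit Defensive.
Import GRing.Theory.

(* Every row and every column of a circulant permutation matrix contains exactly
   one 1, so summing the entries of the quasi-cyclic parity-check matrix H over a
   block of columns (or of rows) yields the base matrix H_b.  With S the 0/1
   matrix summing blocks this reads H S^T = S^T H_b and S H = H_b S.  Choosing
   one row in each block by a matrix E with E S^T = 1 gives
   H_b(C) H_b(D)^T = E H_C H_D^T S^T, which vanishes with H_C H_D^T. *)

Section BlockIndex.

Variables J z : nat.

Lemma blk_off_proof (j : 'I_(J * z)) : (j %% z < z)%N.
Proof. by rewrite ltn_mod; case: z j => [|//] [j]; rewrite muln0. Qed.

Definition blk_off (j : 'I_(J * z)) : 'I_z := Ordinal (blk_off_proof j).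

Lemma blk_ord_proof (b : 'I_J) (s : 'I_z) : (b * z + s < J * z)%N.
Proof.
have lt_s := ltn_ord s; have le_b : (b.+1 <= J)%N := ltn_ord b.
by rewrite (leq_trans (_ : _ < b.+1 * z)%N) ?leq_mul2r ?le_b ?orbT // mulSn addnC ltn_add2r.
Qed.

Definition blk_ord (b : 'I_J) (s : 'I_z) : 'I_(J * z) := Ordinal (blk_ord_proof b s).

Lemma blk_blk_ord (b : 'I_J) (s : 'I_z) : blk (blk_ord b s) = b.
Proof. by apply: val_inj; rewrite /= divnMDl ?divn_small ?addn0 //; case: z s => [[]|]. Qed.

Lemma blk_off_blk_ord (b : 'I_J) (s : 'I_z) : blk_off (blk_ord b s) = s.
Proof. by apply: val_inj; rewrite /= modnMDl modn_small. Qed.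

Lemma blk_ordE (j : 'I_(J * z)) : blk_ord (blk j) (blk_off j) = j.
Proof. by apply: val_inj; rewrite /= -divn_eq. Qed.

Lemma sum_blk (R : nmodType) (b : 'I_J) (F : 'I_z -> R) :
  (\sum_(j | blk j == b) F (blk_off j) = \sum_s F s)%R.
Proof.
rewrite (reindex_onto (blk_ord b) blk_off); last by move=> j /eqP <-; exact: blk_ordE.
by apply: eq_big => [s | s _]; rewrite blk_off_blk_ord ?blk_blk_ord ?eqxx.
Qed.

End BlockIndex.

Local Open Scope ring_scope.

Section Circulant.

Variables (z : nat) (p : 'I_z).

Lemma circ_entry_row_sum (s : nat) : \sum_(t < z) circ_entry p s t = 1.
Proof.
have lt_sp : ((s + p) %% z < z)%N by rewrite ltn_mod; case: z p => [[]|].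
by rewrite /circ_entry -big_mkcond (big_pred1 (Ordinal lt_sp)) // => t; rewrite /= -val_eqE.
Qed.

Lemma circ_entry_col_sum (t : 'I_z) : \sum_(s < z) circ_entry p s t = 1.
Proof.
case: z p t => [[] // | n] q t.
rewrite /circ_entry -big_mkcond (big_pred1 (t - q)) // => s.
by rewrite /= [RHS]eq_sym subr_eq -val_eqE.
Qed.

End Circulant.

Section BlockSums.

Variables (z J L : nat) (P : 'M[option 'I_z]_(J, L)).

Lemma qc_pcm_row_blocksum (i : 'I_(J * z)) (l : 'I_L) :
  \sum_(k | blk k == l) qc_pcm P i k = base_mx P (blk i) l.
Proof.
pose F t := if P (blk i) l is Some p then circ_entry p (i %% z) t else 0.
rewrite (eq_bigr (fun k => F (blk_off k))); last by move=> k /eqP bk; rewrite mxE bk.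
rewrite (sum_blk _ F) /F mxE; case: (P _ _) => [p|]; first exact: circ_entry_row_sum.
exact: big1.
Qed.

Lemma qc_pcm_col_blocksum (b : 'I_J) (k : 'I_(L * z)) :
  \sum_(i | blk i == b) qc_pcm P i k = base_mx P b (blk k).
Proof.
pose F s := if P b (blk k) is Some p then circ_entry p s (blk_off k) else 0.
rewrite (eq_bigr (fun i => F (blk_off i))); last by move=> i /eqP bi; rewrite mxE bi.
rewrite (sum_blk _ F) /F mxE; case: (P _ _) => [p|]; first exact: circ_entry_col_sum.
exact: big1.
Qed.

End BlockSums.

Lemma twisted_kerP (m1 m2 n : nat) (A : 'M['F_2]_(m1, n)) (B : 'M['F_2]_(m2, n)) :
  twisted (code_ker A) (code_ker B) <-> A *m B^T = 0.
Proof.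
split=> [/subsetP dualB_sub | AB0].
  apply/matrixP => i j.
  have : row j B \in dual_code (code_ker B).
    rewrite inE; apply/forallP => d; apply/implyP; rewrite inE => /eqP Bd0.
    by rewrite -(trmxK (d *m _)) trmx_mul trmxK -row_mul Bd0 linear0 trmx0.
  move=> /dualB_sub; rewrite inE tr_row colE mulmxA -colE => /eqP/colP/(_ i).
  by rewrite !mxE.
apply/subsetP => d; rewrite !inE => /forallP d_dual; apply/eqP/colP => i.
have Ai : row i A \in code_ker B.
  by rewrite inE -(trmxK (B *m _)) trmx_mul trmxK -row_mul AB0 linear0 trmx0.
move/implyP: (d_dual (row i A)) => /(_ Ai); rewrite -row_mul => /eqP/rowP/(_ 0).
by rewrite !mxE.
Qed.

Section BlockMatrices.

Variables (J z : nat).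

Definition blocksum_mx : 'M['F_2]_(J, J * z) := \matrix_(b, j) (blk j == b)%:R.

Definition block_row_mx (s : 'I_z) : 'M['F_2]_(J, J * z) :=
  \matrix_(a, i) (i == blk_ord a s)%:R.

Lemma mulmx_blocksum (m : nat) (M : 'M['F_2]_(m, J)) :
  M *m blocksum_mx = \matrix_(a, j) M a (blk j).
Proof.
apply/matrixP => a j; rewrite !mxE (bigD1 (blk j)) //= big1 ?mxE ?eqxx ?mulr1 ?addr0 //.
by move=> b /negPf nbj; rewrite mxE eq_sym nbj mulr0.
Qed.

Lemma tr_blocksum_mulmx (n : nat) (M : 'M['F_2]_(J, n)) :
  blocksum_mx^T *m M = \matrix_(i, l) M (blk i) l.
Proof. by rewrite -[LHS]trmxK trmx_mul trmxK mulmx_blocksum; apply/matrixP => i l; rewrite !mxE. Qed.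

Lemma block_row_mul_blocksum_tr (s : 'I_z) : block_row_mx s *m blocksum_mx^T = 1%:M.
Proof.
apply/matrixP => a b; rewrite !mxE (bigD1 (blk_ord a s)) //= big1 ?addr0.
  by rewrite !mxE eqxx blk_blk_ord mul1r.
by move=> i /negPf ni; rewrite mxE ni mul0r.
Qed.

End BlockMatrices.

Section BaseMatrix.

Variables (z J L : nat) (P : 'M[option 'I_z]_(J, L)).

Lemma qc_pcm_mul_blocksum_tr :
  qc_pcm P *m (blocksum_mx L z)^T = (blocksum_mx J z)^T *m base_mx P.
Proof.
rewrite tr_blocksum_mulmx; apply/matrixP => i l.
rewrite [LHS]mxE [RHS]mxE -qc_pcm_row_blocksum [RHS]big_mkcond; apply: eq_bigr => k _.
by rewrite !mxE; case: eqP; rewrite ?mulr1 ?mulr0.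
Qed.

Lemma blocksum_mul_qc_pcm :
  blocksum_mx J z *m qc_pcm P = base_mx P *m blocksum_mx L z.
Proof.
rewrite mulmx_blocksum; apply/matrixP => b k.
rewrite [LHS]mxE [RHS]mxE -qc_pcm_col_blocksum [RHS]big_mkcond; apply: eq_bigr => i _.
by rewrite !mxE; case: eqP; rewrite ?mul1r ?mul0r.
Qed.

End BaseMatrix.

Theorem mainTheorem2 (z J1 J2 L : nat) (hz : (0 < z)%N)
    (PC : 'M[option 'I_z]_(J1, L)) (PD : 'M[option 'I_z]_(J2, L)) :
  twisted (code_ker (qc_pcm PC)) (code_ker (qc_pcm PD)) ->
  twisted (code_ker (base_mx PC)) (code_ker (base_mx PD)).
Proof.
move=> /twisted_kerP qcCD0; apply/twisted_kerP.
pose E := block_row_mx J1 (Ordinal hz).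
have -> : base_mx PC = E *m (blocksum_mx J1 z)^T *m base_mx PC.
  by rewrite block_row_mul_blocksum_tr mul1mx.
rewrite -(mulmxA E) -qc_pcm_mul_blocksum_tr -!mulmxA -trmx_mul -blocksum_mul_qc_pcm.
by rewrite trmx_mul !mulmxA -(mulmxA E) qcCD0 mulmx0 mul0mx.
Qed.
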